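(* Let $\underline A=(A_1,\dots,A_m)\in\mathcal C_k(d)$, $1\le k\le d$. Then: (i) if $k<d$, then $L_{k+1}(\underline A)=-\infty$; (ii) $\mathrm{rank}(A_aA_b)=k$ for every $a,b\in\{1,\dots,m\}$ if and only if $L_k(\underline A)>-\infty$; (iii) the set of $\underline B=(B_1,\dots,B_m)\in\mathcal C_k(d)$ such that $\mathrm{rank}(B_aB_b)=k$ for all $a,b\in\{1,\dots,m\}$ is open and dense in $\mathcal C_k(d)$.
   Context: Fix integers $m,d\ge1$ and a probability vector $\underline p=(p_1,\dots,p_m)$ with all $p_j>0$. Let $X=\{1,\dots,m\}^{\mathbb N}$ with the Bernoulli product measure $\mathbf p=\underline p^{\mathbb N}$ and the left shift $\sigma$. A random cocycle is a tuple $\underline B=(B_1,\dots,B_m)\in{\rm Mat}(d,\mathbb R)^m$ (Euclidean topology); it defines $\mathbf B^n(\omega)=B_{\omega_{n-1}}\cdots B_{\omega_0}$. For $1\le j\le d$, $L_j(\underline B)\in[-\infty,\infty)$ is the $\mathbf p$-a.s. constant limit $\lim_n\frac1n\log s_j(\mathbf B^n(\omega))$, with $s_1\ge\dots\ge s_d$ the singular values and $\log0=-\infty$. $\mathcal C_k(d)$ is the set of $\underline B$ with $\mathrm{rank}(B_j)=k$ for all $j$ (subspace topology). *)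

From HB Require Import structures.
From mathcomp Require Import all_boot all_order all_algebra.
From mathcomp Require Import all_classical all_reals all_analysis.
Import Order.TTheory GRing.Theory Num.Theory.
Local Open Scope classical_set_scope.
Local Open Scope ring_scope.

(* Alphabet {1,...,m} with m >= 1 is encoded as 'I_m.+1 (m.+1 symbols). *)
Definition Omega (m : nat) := nat -> 'I_m.+1.
HB.instance Definition _ (m : nat) := Choice.on (Omega m).
HB.instance Definition _ (m : nat) := isPointed.Build (Omega m) (fun _ => ord0).

(* generators of the product (cylinder) sigma-algebra on {1..m}^N *)
Definition cyl_gen (m : nat) : set (set (Omega m)) :=
  [set A | exists (i : nat) (a : 'I_m.+1), A = [set w : Omega m | w i = a]].

Definition Seq (m : nat) := g_sigma_algebraType (cyl_gen m).

(* P is the Bernoulli product measure p^N: its value on every cylinder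
   [w_0 .. w_{n-1}] = s is the product of the p's (this determines P). *)
Definition bernoulli_product (R : realType) (m : nat) (p : 'I_m.+1 -> R)
    (P : probability (Seq m) R) : Prop :=
  forall s : seq 'I_m.+1,
    P [set w : Seq m | forall i, (i < size s)%N -> w i = nth ord0 s i]
    = (\prod_(a <- s) p a)%:E.

Fixpoint cocycle_prod (R : realType) (m d : nat) (B : 'I_m.+1 -> 'M[R]_d)
    (w : nat -> 'I_m.+1) (n : nat) : 'M[R]_d :=
  match n with
  | 0 => 1%:M
  | n'.+1 => B (w n') *m cocycle_prod R m d B w n'
  end.

Definition vnorm (R : realType) (d : nat) (v : 'rV[R]_d) : R :=
  Num.sqrt (\sum_(i < d) v 0 i ^+ 2).

(* j-th singular value (1 <= j <= d), via the Courant-Fischer min-max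
   formula: s_j(M) = max over j-dim subspaces V of min_{v in V, |v|=1} |M v|.
   A j-dim subspace is the row space of a rank-j matrix U : 'M_(j,d);
   M v is computed as v *m M^T (row-vector convention). *)
Definition sv (R : realType) (d : nat) (j : nat) (M : 'M[R]_d) : R :=
  sup [set x : R | exists U : 'M[R]_(j, d), \rank U = j /\
    x = inf [set vnorm R d ((c *m U) *m M^T) | c in [set c : 'rV[R]_j |
                                              vnorm R d (c *m U) = 1]]].

Definition elog (R : realType) (x : R) : \bar R :=
  if 0 < x then (ln x)%:E else -oo%E.

Definition lyap_limit (R : realType) (m d : nat) (P : probability (Seq m) R)
    (B : 'I_m.+1 -> 'M[R]_d) (j : nat) (l : \bar R) : Prop :=
  {ae P, forall w : Seq m,
     (fun n : nat => ((n%:R)^-1)%:E * elog R (sv R d j (cocycle_prod R m d B w n)))%E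
       @ \oo --> l}.

(* L_j(B): the P-a.s. constant limit (it exists, by Furstenberg-Kesten) *)
Definition Lyap (R : realType) (m d : nat) (P : probability (Seq m) R)
    (B : 'I_m.+1 -> 'M[R]_d) (j : nat) : \bar R :=
  xget 0%E [set l | lyap_limit R m d P B j l].

Definition Ck (R : realType) (m d k : nat) : set ('I_m.+1 -> 'M[R]_d) :=
  [set B | forall a, \rank (B a) = k].

(* Euclidean topology on Mat(d,R)^m: e-closeness (sup norm over all entries) *)
Definition close (R : realType) (m d : nat) (e : R)
    (B B' : 'I_m.+1 -> 'M[R]_d) : Prop :=
  forall a i j, `|B' a i j - B a i j| < e.

Definition rel_open (R : realType) (m d : nat)
    (C S : set ('I_m.+1 -> 'M[R]_d)) : Prop :=
  S `<=` C /\ forall B, S B -> exists e : R, 0 < e /\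
     forall B', C B' -> close R m d e B B' -> S B'.

Definition rel_dense (R : realType) (m d : nat)
    (C S : set ('I_m.+1 -> 'M[R]_d)) : Prop :=
  S `<=` C /\ forall B, C B -> forall e : R, 0 < e ->
     exists B', S B' /\ close R m d e B B'.

(* (i) For n >= 1 the matrix B^n(w) has rank at most k, so s_{k+1}(B^n(w)) = 0.
   (ii) If every A_a A_b has rank k, then A_a is injective on the range of A_b with a
   uniform constant: |A_b x| <= K |A_a A_b x|.  Starting from the k-dimensional range of
   some A_c, every step along a word loses at most a factor K, so s_k(A^n(w)) >= K^-n and
   L_k >= -log K.  Conversely, if rank (A_a A_b) < k, almost every word has the letters
   b, a at some positions 2j, 2j+1 (avoiding them on the first n pairs of positions has
   probability (1 - p_b p_a)^n), and from then on s_k(A^n(w)) = 0.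
   (iii) rank (B_a B_b) >= k is witnessed by a k x k minor det (L B_a B_b N') that does
   not vanish, and this minor is continuous in B.  For density the pairs are fixed one at
   a time: right-multiplying every B_c by G(t) = (1 - t) I + t N_a' L_b preserves C_k(d)
   when det G(t) <> 0, moves B by O(t), and turns a k x k minor of B_a G(t) B_b into the
   polynomial det ((1 - t) N_a C_b + t I), which equals 1 at t = 1; so some small t > 0
   avoids the finitely many roots of both determinants. *)

From Pilot Require Import Defs.
From HB Require Import structures.
From mathcomp Require Import all_boot all_order all_algebra.
From mathcomp Require Import all_classical all_reals all_analysis.
From mathcomp Require Import perm.
Import Order.TTheory GRing.Theory Num.Theory numFieldNormedType.Exports.
Local Open Scope classical_set_scope.
Local Open Scope ring_scope.

Set Implicit Arguments.
Unset Strict Implicit.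
Unset Printing Implicit Defensive.

Section EuclideanNorm.
Variables (R : realType) (d : nat).
Local Notation vnorm := (vnorm R d).

Definition mxnorm1 p q (M : 'M[R]_(p, q)) : R := \sum_i \sum_j `|M i j|.

Lemma mxnorm1_ge0 p q (M : 'M[R]_(p, q)) : 0 <= mxnorm1 M.
Proof. by apply: sumr_ge0 => i _; apply: sumr_ge0. Qed.

Lemma entry_le_mxnorm1 p q (M : 'M[R]_(p, q)) i j : `|M i j| <= mxnorm1 M.
Proof.
apply: le_trans (_ : `|M i j| <= \sum_j' `|M i j'|) _.
  by rewrite (bigD1 j) //= lerDl sumr_ge0.
by rewrite /mxnorm1 (bigD1 i) //= lerDl sumr_ge0 // => i' _; exact: sumr_ge0.
Qed.

Lemma vnorm_ge0 (v : 'rV[R]_d) : 0 <= vnorm v.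
Proof. exact: sqrtr_ge0. Qed.

Lemma vnorm0 : vnorm 0 = 0.
Proof. by rewrite /Defs.vnorm big1 ?sqrtr0 // => i _; rewrite mxE expr0n. Qed.

Lemma vnormZ (a : R) (v : 'rV[R]_d) : vnorm (a *: v) = `|a| * vnorm v.
Proof.
rewrite /Defs.vnorm (eq_bigr (fun i => a ^+ 2 * v 0 i ^+ 2)) => [|i _].
  by rewrite -mulr_sumr sqrtrM ?sqr_ge0 // sqrtr_sqr.
by rewrite mxE exprMn.
Qed.

Lemma vnorm_gt0 (v : 'rV[R]_d) : v != 0 -> 0 < vnorm v.
Proof.
move=> v_neq0; rewrite sqrtr_gt0 lt_def sumr_ge0 ?andbT => [|i _]; last first.
  exact: sqr_ge0.
rewrite psumr_eq0 => [|i _]; last exact: sqr_ge0.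
apply: contra v_neq0 => /allP v0; apply/eqP/rowP => i.
by have := v0 i (mem_index_enum i); rewrite /= sqrf_eq0 mxE => /eqP.
Qed.

Lemma vnorm_le_norm1 (v : 'rV[R]_d) : vnorm v <= \sum_i `|v 0 i|.
Proof.
have s_ge0 : 0 <= \sum_i `|v 0 i| by apply: sumr_ge0.
rewrite -(ger0_norm s_ge0) -sqrtr_sqr ler_wsqrtr // expr2 mulr_suml.
apply: ler_sum => i _; rewrite -real_normK ?num_real // expr2.
by rewrite ler_wpM2l // (bigD1 i) //= lerDl sumr_ge0.
Qed.

Lemma entry_le_vnorm (v : 'rV[R]_d) i : `|v 0 i| <= vnorm v.
Proof.
rewrite -sqrtr_sqr ler_wsqrtr // (bigD1 i) //= lerDl.
by apply: sumr_ge0 => j _; exact: sqr_ge0.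
Qed.

Lemma vnorm_mulmx_le (v : 'rV[R]_d) (M : 'M[R]_d) :
  vnorm (v *m M) <= mxnorm1 M * vnorm v.
Proof.
apply: le_trans (vnorm_le_norm1 _) _.
rewrite /mxnorm1 exchange_big /= mulr_suml; apply: ler_sum => j _.
rewrite mxE; apply: le_trans (ler_norm_sum _ _ _) _.
rewrite mulr_suml; apply: ler_sum => i _.
by rewrite normrM mulrC ler_wpM2l // entry_le_vnorm.
Qed.

End EuclideanNorm.

Section SingularValues.
Variables (R : realType) (d : nat).
Local Notation vnorm := (vnorm R d).

Definition stretches j (U : 'M[R]_(j, d)) (M : 'M[R]_d) : set R :=
  [set vnorm ((c *m U) *m M^T) | c in [set c : 'rV[R]_j | vnorm (c *m U) = 1]].

Lemma sv_stretchesE j (M : 'M[R]_d) : sv R d j M =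
  sup [set x | exists U : 'M[R]_(j, d), \rank U = j /\ x = inf (stretches U M)].
Proof. by []. Qed.

Lemma normalize_row j (U : 'M[R]_(j, d)) (c : 'rV[R]_j) : c *m U != 0 ->
  vnorm (((vnorm (c *m U))^-1 *: c) *m U) = 1.
Proof.
move=> cU_neq0; rewrite -scalemxAl vnormZ ger0_norm ?invr_ge0 ?vnorm_ge0 //.
by rewrite mulVf // gt_eqF // vnorm_gt0.
Qed.

Lemma stretches_bound j (U : 'M[R]_(j, d)) M x :
  stretches U M x -> 0 <= x <= mxnorm1 M^T.
Proof.
case=> c /= cU1 <-; rewrite vnorm_ge0 /=.
by apply: le_trans (vnorm_mulmx_le _ _) _; rewrite cU1 mulr1.
Qed.

Lemma inf_stretches_bound j (U : 'M[R]_(j, d)) M :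
  0 <= inf (stretches U M) <= mxnorm1 M^T.
Proof.
have [->|/set0P[x Sx]] := eqVneq (stretches U M) set0.
  by rewrite inf0 lexx mxnorm1_ge0.
have lb : has_lbound (stretches U M).
  by exists 0 => y /stretches_bound /andP[].
rewrite lb_le_inf /=; last 2 first.
- by exists x.
- by move=> y /stretches_bound /andP[].
by apply: le_trans (ge_inf lb Sx) _; case/andP: (stretches_bound Sx).
Qed.

Lemma sv_ge j (M : 'M[R]_d) (U : 'M[R]_(j, d)) (b : R) :
  (0 < j)%N -> \rank U = j ->
  (forall c : 'rV[R]_j, vnorm (c *m U) = 1 -> b <= vnorm ((c *m U) *m M^T)) ->
  b <= sv R d j M.
Proof.
move=> j_gt0 rankU U_stretch; rewrite sv_stretchesE.
apply: le_trans (ub_le_sup _ _) => /=; last by exists U.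
  have rowfU : row_free U by rewrite /row_free rankU.
  pose e : 'rV[R]_j := delta_mx 0 (Ordinal j_gt0).
  have eU_neq0 : e *m U != 0.
    rewrite mulmx_free_eq0 //.
    by apply/eqP => /matrixP /(_ 0 (Ordinal j_gt0)) /eqP; rewrite !mxE !eqxx oner_eq0.
  apply: lb_le_inf => [|y [c /= c1 <-]]; last exact: U_stretch.
  pose c := (vnorm (e *m U))^-1 *: e.
  by exists (vnorm (c *m U *m M^T)), c; first exact: normalize_row.
by exists (mxnorm1 M^T) => x [V [_ ->]]; case/andP: (inf_stretches_bound V M).
Qed.

Lemma inf_stretches_eq0 j (U : 'M[R]_(j, d)) M :
  \rank U = j -> (\rank M < j)%N -> inf (stretches U M) = 0.
Proof.
move=> rankU rankM.
have rowfU : row_free U by rewrite /row_free rankU.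
have rank_lt : (\rank (U *m M^T) < j)%N.
  by apply: leq_ltn_trans (mxrankM_maxr _ _) _; rewrite mxrank_tr.
have ker_neq0 : kermx (U *m M^T) != 0.
  by rewrite -mxrank_eq0 mxrank_ker subn_eq0 -ltnNge.
have [i ker_i] : exists i, row i (kermx (U *m M^T)) != 0.
  apply/existsP; apply: contraNT ker_neq0 => /existsPn ker0.
  by apply/eqP/row_matrixP => i; rewrite row0; apply/eqP/negPn/ker0.
pose c := row i (kermx (U *m M^T)).
have cUM : c *m U *m M^T = 0 by rewrite -mulmxA /c -row_mul mulmx_ker row0.
have cU_neq0 : c *m U != 0 by rewrite mulmx_free_eq0.
have S0 : stretches U M 0.
  exists ((vnorm (c *m U))^-1 *: c); first exact: normalize_row.
  by rewrite /= -scalemxAl -scalemxAl cUM scaler0 vnorm0.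
have lb : has_lbound (stretches U M) by exists 0 => y /stretches_bound /andP[].
apply/le_anti; rewrite (ge_inf lb S0) /=.
by apply: lb_le_inf => [|y /stretches_bound /andP[]]; first exists 0.
Qed.

Lemma sv_eq0 j (M : 'M[R]_d) : (j <= d)%N -> (\rank M < j)%N -> sv R d j M = 0.
Proof.
move=> j_le_d rankM; rewrite sv_stretchesE.
suff -> : [set x | exists U : 'M[R]_(j, d), \rank U = j /\ x = inf (stretches U M)]
    = [set 0] by rewrite sup1.
apply/seteqP; split=> [x [U [rankU ->]]|_ ->] /=; first by rewrite inf_stretches_eq0.
by exists (pid_mx j); rewrite rank_pid_mx // inf_stretches_eq0 ?rank_pid_mx.
Qed.

End SingularValues.

Section CocycleRank.
Variables (R : realType) (m d : nat) (A : 'I_m.+1 -> 'M[R]_d) (w : nat -> 'I_m.+1).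
Local Notation Aprod := (cocycle_prod R m d A w).

Lemma rank_cocycle_prodS n : (\rank (Aprod n.+1) <= \rank (A (w n)))%N.
Proof. exact: mxrankM_maxl. Qed.

Lemma rank_cocycle_prod_pair i a b : w i = b -> w i.+1 = a ->
  forall n, (i.+2 <= n)%N -> (\rank (Aprod n) <= \rank (A a *m A b))%N.
Proof.
move=> wi wi1; elim=> [//|n IHn]; rewrite leq_eqVlt => /orP[/eqP[<-]|].
  by rewrite /= wi wi1 mulmxA mxrankM_maxl.
by rewrite ltnS => /IHn; apply: leq_trans; exact: mxrankM_maxr.
Qed.

Lemma cocycle_prod_tr_range n c (y : 'rV[R]_d) :
  exists y' b, y *m (A c)^T *m (Aprod n)^T = y' *m (A b)^T.
Proof.
case: n => [|n]; first by exists y, c; rewrite trmx1 mulmx1.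
by exists (y *m (A c)^T *m (Aprod n)^T), (w n); rewrite /= trmx_mul mulmxA.
Qed.

End CocycleRank.

Section Expansion.
Variables (R : realType) (d : nat).
Local Notation vnorm := (vnorm R d).

Lemma expansion_bound (M N : 'M[R]_d) : \rank (M *m N) = \rank N ->
  exists2 K, 0 < K & forall y : 'rV[R]_d,
    vnorm (y *m N^T) <= K * vnorm (y *m N^T *m M^T).
Proof.
move=> rankMN.
have /submxP[D ND] : (N <= M *m N)%MS.
  by rewrite -(mxrank_leqif_sup (submxMl M N)).2 rankMN.
exists (1 + mxnorm1 D^T) => [|y]; first by rewrite ltr_wpDr ?mxnorm1_ge0.
rewrite {1}ND !trmx_mul !mulmxA; apply: le_trans (vnorm_mulmx_le _ _) _.
by rewrite ler_wpM2r ?vnorm_ge0 // lerDr.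
Qed.

Lemma uniform_expansion_bound m (A : 'I_m.+1 -> 'M[R]_d) :
  (forall a b, \rank (A a *m A b) = \rank (A b)) ->
  exists2 K, 0 < K & forall a b (y : 'rV[R]_d),
    vnorm (y *m (A b)^T) <= K * vnorm (y *m (A b)^T *m (A a)^T).
Proof.
move=> rankAA.
have /choice[K K_ab] : forall ab : 'I_m.+1 * 'I_m.+1, exists K, 0 < K /\
    forall y : 'rV[R]_d,
      vnorm (y *m (A ab.2)^T) <= K * vnorm (y *m (A ab.2)^T *m (A ab.1)^T).
  by move=> [a b]; have [K ? ?] := expansion_bound (rankAA a b); exists K.
have K_le ab : K ab <= \sum_ab' K ab'.
  by rewrite (bigD1 ab) //= lerDl sumr_ge0 // => ab' _; rewrite ltW // (K_ab ab').1.
exists (\sum_ab K ab) => [|a b y].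
  by apply: lt_le_trans (K_le (ord0, ord0)); exact: (K_ab _).1.
apply: le_trans ((K_ab (a, b)).2 y) _.
by rewrite ler_wpM2r ?vnorm_ge0 ?K_le.
Qed.

Variables (m : nat) (A : 'I_m.+1 -> 'M[R]_d) (K : R).
Hypothesis K_gt0 : 0 < K.
Hypothesis A_expansion : forall a b (y : 'rV[R]_d),
  vnorm (y *m (A b)^T) <= K * vnorm (y *m (A b)^T *m (A a)^T).

Lemma cocycle_prod_expansion w n c (y : 'rV[R]_d) :
  vnorm (y *m (A c)^T) <=
    K ^+ n * vnorm (y *m (A c)^T *m (cocycle_prod R m d A w n)^T).
Proof.
elim: n => [|n IHn]; first by rewrite trmx1 mulmx1 expr0 mul1r.
have [y' [b yAB]] := cocycle_prod_tr_range A w n c y.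
apply: le_trans IHn _; rewrite /= trmx_mul mulmxA yAB exprSr -mulrA.
by apply: ler_wpM2l (A_expansion _ _ _); rewrite exprn_ge0 // ltW.
Qed.

Lemma sv_cocycle_prod_ge k w n c : (0 < k)%N -> \rank (A c) = k ->
  (K ^+ n)^-1 <= sv R d k (cocycle_prod R m d A w n).
Proof.
move=> k_gt0 rankAc.
have [U rankU /submxP[D UD]] :
    exists2 U : 'M[R]_(k, d), \rank U = k & (U <= (A c)^T)%MS.
  by rewrite -rankAc -mxrank_tr; exists (row_base (A c)^T); rewrite eq_row_base.
apply: (sv_ge k_gt0 rankU) => u u1.
have Kn_gt0 : 0 < K ^+ n by rewrite exprn_gt0.
rewrite -(ler_pM2l Kn_gt0) mulfV ?gt_eqF // -u1 UD !mulmxA.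
exact: cocycle_prod_expansion.
Qed.

End Expansion.

Section LyapunovExponents.
Variables (R : realType) (m d : nat) (P : probability (Seq m) R).
Implicit Types (B : 'I_m.+1 -> 'M[R]_d) (w : nat -> 'I_m.+1).

Definition lyap_seq B j w (n : nat) : \bar R :=
  ((n%:R^-1)%:E * elog R (sv R d j (cocycle_prod R m d B w n)))%E.

Lemma ae_witness (Q : Seq m -> Prop) : {ae P, forall w, Q w} -> exists w, Q w.
Proof.
case=> N [_ PN0 notQ_N]; apply: contrapT => noQ.
suff NT : N = setT by move: PN0; rewrite NT probability_setT => /eqP; rewrite onee_eq0.
by apply/seteqP; split=> // w _; apply: notQ_N => Qw; apply: noQ; exists w.
Qed.

Lemma lyap_limit_unique B j l l' :
  lyap_limit R m d P B j l -> lyap_limit R m d P B j l' -> l = l'.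
Proof.
move=> Bl Bl'.
have [w [Blw Bl'w]] := ae_witness (filterS2 (ae_filter_ringOfSetsType P)
  (fun w (lw : _ --> l) (l'w : _ --> l') => conj lw l'w) Bl Bl').
by rewrite -(cvg_lim (@ereal_hausdorff R) Blw) (cvg_lim (@ereal_hausdorff R) Bl'w).
Qed.

Lemma Lyap_eq B j l : lyap_limit R m d P B j l -> Lyap R m d P B j = l.
Proof.
move=> Bl; rewrite /Lyap; case: xgetP => [l' -> Bl'|]; last by move/(_ l).
exact: lyap_limit_unique Bl' Bl.
Qed.

Lemma lyap_seq_Ny B j w N :
  (forall n, (N <= n)%N -> sv R d j (cocycle_prod R m d B w n) = 0) ->
  lyap_seq B j w @ \oo --> -oo%E.
Proof.
move=> sv0; apply: cvg_near_cst.
apply: filterS (nbhs_infty_ge (maxn N 1)) => n /=; rewrite geq_max => /andP[Nn n_gt0].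
by rewrite /lyap_seq sv0 // /elog ltxx mulrNy gtr0_sg ?invr_gt0 ?ltr0n // mul1e.
Qed.

Lemma Lyap_rank_lt B j : (j <= d)%N -> (forall a, (\rank (B a) < j)%N) ->
  Lyap R m d P B j = -oo%E.
Proof.
move=> j_le_d rankB; apply/Lyap_eq/aeW => w.
apply: (@lyap_seq_Ny _ _ _ 1) => -[//|n] _.
by apply: sv_eq0 => //; apply: leq_ltn_trans (rankB (w n)); exact: rank_cocycle_prodS.
Qed.

Lemma Lyap_gt_Ny B k : (0 < k)%N -> (forall a, \rank (B a) = k) ->
  (forall a b, \rank (B a *m B b) = k) -> (-oo < Lyap R m d P B k)%E.
Proof.
move=> k_gt0 rankB rankBB.
have [K K_gt0 BK] : exists2 K, 0 < K & forall a b (y : 'rV[R]_d),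
    vnorm R d (y *m (B b)^T) <= K * vnorm R d (y *m (B b)^T *m (B a)^T).
  by apply: uniform_expansion_bound => a b; rewrite rankB rankBB.
(* Without an a.s. limit, [Lyap] is the default value [0] of [xget]. *)
have [[l Bl]|no_limit] := pselect (exists l, lyap_limit R m d P B k l); last first.
  by rewrite /Lyap xgetPN ?ltNyr // => l Bl; apply: no_limit; exists l.
rewrite (Lyap_eq Bl); have [w Blw] := ae_witness Bl.
apply: lt_le_trans (ltNyr (- ln K)) _.
rewrite -(cvg_lim (@ereal_hausdorff R) Blw) lime_ge //; first by apply/cvg_ex; exists l.
apply: filterS (nbhs_infty_ge 1) => n /= n_gt0.
have n_neq0 : n%:R != 0 :> R by rewrite pnatr_eq0 -lt0n.
have Kn_gt0 : 0 < (K ^+ n)^-1 by rewrite invr_gt0 exprn_gt0.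
have sv_ge := sv_cocycle_prod_ge K_gt0 BK w n k_gt0 (rankB ord0).
have sv_gt0 := lt_le_trans Kn_gt0 sv_ge.
rewrite /lyap_seq /elog sv_gt0 -EFinM lee_fin -[leLHS](mulKf n_neq0).
rewrite mulrN mulr_natl -lnXn // -lnV ?posrE ?exprn_gt0 //.
by rewrite ler_wpM2l ?invr_ge0 ?ler0n // ler_ln ?posrE.
Qed.

End LyapunovExponents.

Lemma measure_big_setU d (T : ringOfSetsType d) (R : realFieldType)
    (mu : {measure set T -> \bar R}) (I : eqType) (r : seq I) (Q : pred I)
    (F : I -> set T) :
  uniq r -> (forall i, measurable (F i)) ->
  (forall i j, i != j -> F i `&` F j = set0) ->
  mu (\big[setU/set0]_(i <- r | Q i) F i) = (\sum_(i <- r | Q i) mu (F i))%E.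
Proof.
move=> + mF disjF; elim: r => [|i r IHr]; first by rewrite !big_nil measure0.
rewrite /= => /andP[i_notin_r /IHr {}IHr]; rewrite !big_cons; case: (Q i) => //.
rewrite measureU //.
- by congr (_ + _)%E; exact: IHr.
- by apply: bigsetU_measurable => j _; exact: mF.
rewrite big_seq_cond; elim/big_rec: _ => [|j X /andP[j_in_r _] FiX]; first exact: setI0.
by rewrite setIUr FiX setU0 disjF //; apply: contraNneq i_notin_r => ->.
Qed.

Lemma prodr_nat_double (S : pzSemiRingType) (h : nat -> S) N :
  \prod_(0 <= j < N.*2) h j = \prod_(0 <= i < N) (h i.*2 * h i.*2.+1).
Proof.
elim: N => [|N IHN]; first by rewrite !big_nil.
by rewrite doubleS !big_nat_recr //= IHN mulrA.
Qed.

Section BernoulliPairs.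
Variables (R : realType) (m : nat) (p : 'I_m.+1 -> R) (P : probability (Seq m) R).
Hypotheses (p_pos : forall a, 0 < p a) (p_sum : \sum_(a < m.+1) p a = 1).
Hypothesis P_bern : bernoulli_product R m p P.

Definition cylinder (s : seq 'I_m.+1) : set (Seq m) :=
  [set w : Seq m | forall i, (i < size s)%N -> w i = nth ord0 s i].

Lemma measurable_cylinder s : measurable (cylinder s).
Proof.
have -> : cylinder s = \bigcap_i
    (if (i < size s)%N then [set w : Seq m | w i = nth ord0 s i] else setT).
  apply/seteqP; split=> w /= cyl_w i; first by case: ifP => // /cyl_w.
  by move=> i_lt; have := cyl_w i I; rewrite /= i_lt.
apply: bigcapT_measurable => i; case: ifP => // _.
by apply: sub_sigma_algebra; exists i, (nth ord0 s i).
Qed.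

Lemma pair_mass_complement a b :
  \sum_(ab : 'I_m.+1 * 'I_m.+1 | ab != (b, a)) p ab.1 * p ab.2 = 1 - p b * p a.
Proof.
have total : \sum_(ab : 'I_m.+1 * 'I_m.+1) p ab.1 * p ab.2 = 1.
  rewrite -(pair_bigA _ (fun x y => p x * p y)) /=.
  by under eq_bigr do rewrite -mulr_sumr; rewrite -mulr_suml p_sum mulr1.
by move: total; rewrite (bigD1 (b, a)) //= => <-; rewrite addrC addrK.
Qed.

Section FirstPairs.
Variable n : nat.
Local Notation pair_fun := {ffun 'I_n.+1 -> 'I_m.+1 * 'I_m.+1}.
Implicit Types f g : pair_fun.

Definition pair_word f : seq 'I_m.+1 :=
  mkseq (fun j => let ab := f (inord j./2) in if odd j then ab.2 else ab.1) n.+1.*2.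

Definition pair_cylinder f := cylinder (pair_word f).

Lemma pair_cylinderP f (w : Seq m) : pair_cylinder f w <->
  forall i : 'I_n.+1, w i.*2 = (f i).1 /\ w i.*2.+1 = (f i).2.
Proof.
rewrite /pair_cylinder /cylinder size_mkseq; split=> [cyl_w i | fw j j_lt].
  have [i_lt i1_lt] : (i.*2 < n.+1.*2 /\ i.*2.+1 < n.+1.*2)%N.
    by rewrite ltn_double -doubleS leq_double.
  rewrite !cyl_w // !nth_mkseq //= odd_double half_double uphalf_double.
  by rewrite inord_val.
have j2_lt : (j./2 < n.+1)%N.
  by rewrite -ltn_double (leq_ltn_trans _ j_lt) // -{2}(odd_double_half j) leq_addl.
rewrite nth_mkseq // (_ : inord j./2 = Ordinal j2_lt); last first.
  by apply: val_inj; rewrite /= inordK.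
have [fw1 fw2] := fw (Ordinal j2_lt).
by rewrite -{1}(odd_double_half j) /=; case: (odd j).
Qed.

Lemma pair_cylinder_disj f g : f != g -> pair_cylinder f `&` pair_cylinder g = set0.
Proof.
move=> /eqP f_neq_g; apply/seteqP; split=> // w [/pair_cylinderP fw /pair_cylinderP gw].
apply/f_neq_g/ffunP => i; have [f1 f2] := fw i; have [g1 g2] := gw i.
by rewrite [f i]surjective_pairing [g i]surjective_pairing -f1 -f2 -g1 -g2.
Qed.

Lemma P_pair_cylinder f :
  P (pair_cylinder f) = (\prod_i (p (f i).1 * p (f i).2))%:E.
Proof.
rewrite /pair_cylinder P_bern big_map -[iota 0 _]/(index_iota 0 n.+1.*2).
rewrite prodr_nat_double big_mkord; congr (_%:E); apply: eq_bigr => i _.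
by rewrite /= !odd_double /= half_double uphalf_double !inord_val.
Qed.

Variables a b : 'I_m.+1.

Definition avoiding :=
  \big[setU/set0]_(f : pair_fun | [forall i, f i != (b, a)]) pair_cylinder f.

Lemma measurable_avoiding : measurable avoiding.
Proof. by apply: bigsetU_measurable => f _; exact: measurable_cylinder. Qed.

Lemma P_avoiding : P avoiding = ((1 - p b * p a) ^+ n.+1)%:E.
Proof.
rewrite /avoiding measure_big_setU ?index_enum_uniq //; last 2 first.
- by move=> f; exact: measurable_cylinder.
- exact: pair_cylinder_disj.
rewrite (eq_bigr _ (fun f _ => P_pair_cylinder f)) sumEFin big_mkcond.
rewrite -pair_mass_complement; congr (_%:E).
pose q (ab : 'I_m.+1 * 'I_m.+1) := if ab != (b, a) then p ab.1 * p ab.2 else 0.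
rewrite (eq_bigr (fun f : pair_fun => \prod_i q (f i))) => [|f _].
  rewrite -(bigA_distr_bigA (fun _ => q)) prodr_const card_ord.
  by congr (_ ^+ _); rewrite [RHS]big_mkcond.
case: ifP => [/forallP avoid_f|/negbT/forallPn[i /negPn f_i]].
  by apply: eq_bigr => i _; rewrite /q avoid_f.
by rewrite (bigD1 i) //= /q f_i mul0r.
Qed.

End FirstPairs.

Lemma ae_pair_occurs a b :
  {ae P, forall w : Seq m, exists j, w j.*2 = b /\ w j.*2.+1 = a}.
Proof.
pose r := 1 - p b * p a.
have r_ge0 : 0 <= r.
  by rewrite /r -pair_mass_complement sumr_ge0 // => ab _; rewrite mulr_ge0 ?ltW.
have r_lt1 : `|r| < 1 by rewrite ger0_norm // /r gtrBl mulr_gt0.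
exists (\bigcap_n avoiding n a b); split.
- by apply: bigcapT_measurable => n; exact: measurable_avoiding.
- apply/le_anti; rewrite measure_ge0 andbT; apply/lee_addgt0Pr => e e_gt0.
  have [N _ rN] := (cvgrPdist_lt _ _).1 (cvg_expr r_lt1) e e_gt0.
  have rN1 : r ^+ N.+1 < e.
    by have := rN N.+1 (leqnSn N); rewrite /= sub0r normrN ger0_norm ?exprn_ge0.
  have le_avoidN : (P (\bigcap_n avoiding n a b) <= P (avoiding N a b))%E.
    apply: le_measure; rewrite ?inE; last exact: bigcap_inf.
    + by apply: bigcapT_measurable => n; exact: measurable_avoiding.
    + exact: measurable_avoiding.
  by rewrite add0e (le_trans le_avoidN) // P_avoiding lee_fin ltW.
- move=> w /= no_pair n _.
  pose f : {ffun 'I_n.+1 -> 'I_m.+1 * 'I_m.+1} :=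
    [ffun i : 'I_n.+1 => (w i.*2, w i.*2.+1)].
  rewrite /avoiding (bigD1 f) /=; last first.
    by apply/forallP => i; rewrite ffunE; apply/eqP => -[wb wa]; apply: no_pair; exists i.
  by left; apply/pair_cylinderP => i; rewrite ffunE.
Qed.

Lemma Lyap_rank_pair_lt d (B : 'I_m.+1 -> 'M[R]_d) j a b :
  (j <= d)%N -> (\rank (B a *m B b) < j)%N -> Lyap R m d P B j = -oo%E.
Proof.
move=> j_le_d rank_lt; apply: Lyap_eq.
apply: filterS (ae_pair_occurs a b) => w [i [wb wa]].
apply: (@lyap_seq_Ny _ _ _ _ _ _ i.*2.+2) => n n_ge.
apply: sv_eq0 => //; apply: leq_ltn_trans rank_lt.
exact: rank_cocycle_prod_pair wb wa n n_ge.
Qed.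

End BernoulliPairs.

Section Closeness.
Variables (R : realType) (m d : nat).
Local Notation family := ('I_m.+1 -> 'M[R]_d).
Local Notation close := (Defs.close R m d).

Lemma close_mono e e' (B B' : family) : close e B B' -> e <= e' -> close e' B B'.
Proof. by move=> BB' le_ee' a i j; apply: lt_le_trans (BB' a i j) le_ee'. Qed.

Lemma close_triangle e1 e2 (B1 B2 B3 : family) :
  close e1 B1 B2 -> close e2 B2 B3 -> close (e1 + e2) B1 B3.
Proof.
move=> B12 B23 a i j; apply: le_lt_trans (ler_distD (B2 a i j) _ _) _.
by rewrite addrC ltrD.
Qed.

Definition close_to (B0 : family) : set_system family :=
  filter_from (fun e : R => 0 < e) (fun e => [set B | close e B0 B]).

Global Instance close_to_filter B0 : Filter (close_to B0).
Proof.
apply: filter_from_filter => [|e1 e2 e1_gt0 e2_gt0]; first by exists 1.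
exists (Num.min e1 e2); first by rewrite lt_min e1_gt0.
by move=> B B0B; split=> /=; apply: (close_mono B0B); rewrite ge_min lexx ?orbT.
Qed.

Definition mx_cvg_at p q (G : family -> 'M[R]_(p, q)) B0 :=
  forall i j, (fun B => G B i j) @ close_to B0 --> G B0 i j.

Lemma mx_cvg_at_cst p q (M : 'M[R]_(p, q)) B0 : mx_cvg_at (fun=> M) B0.
Proof. by move=> i j; exact: cvg_cst. Qed.

Lemma mx_cvg_at_entry a B0 : mx_cvg_at (fun B : family => B a) B0.
Proof.
move=> i j; apply/cvgrPdist_lt => e e_gt0.
by exists e => // B /= B0B; rewrite distrC; apply: B0B.
Qed.

Lemma mx_cvg_at_mulmx p q r
    (G1 : family -> 'M[R]_(p, q)) (G2 : family -> 'M[R]_(q, r)) B0 :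
  mx_cvg_at G1 B0 -> mx_cvg_at G2 B0 -> mx_cvg_at (fun B => G1 B *m G2 B) B0.
Proof.
move=> G1_cvg G2_cvg i j; rewrite mxE; under eq_fun do rewrite mxE.
apply: (cvg_big add_continuous (Ff := fun l B => G1 B i l * G2 B l j)) => l _.
exact: cvgM (G1_cvg i l) (G2_cvg l j).
Qed.

Lemma cvg_det_at q (G : family -> 'M[R]_q) B0 :
  mx_cvg_at G B0 -> (fun B => \det (G B)) @ close_to B0 --> \det (G B0).
Proof.
move=> G_cvg; apply: (cvg_big add_continuous
  (Ff := fun (s : 'S_q) B => (-1) ^+ s * \prod_i G B i (s i))) => s _.
apply: cvgM; first exact: cvg_cst.
by apply: (cvg_big mul_continuous (Ff := fun i B => G B i (s i))) => i _; exact: G_cvg.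
Qed.

End Closeness.

Section RankFactorization.
Variable F : fieldType.

Lemma rank_factorization p q (M : 'M[F]_(p, q)) r : \rank M = r ->
  exists (C : 'M[F]_(p, r)) (N : 'M[F]_(r, q)) (L : 'M[F]_(r, p)) (N' : 'M[F]_(q, r)),
    [/\ M = C *m N, L *m C = 1%:M & N *m N' = 1%:M].
Proof.
move=> <-; have /row_fullP[L LC] := col_base_full M.
have /row_freeP[N' NN'] := row_base_free M.
by exists (col_base M), (row_base M), L, N'; rewrite mulmx_base.
Qed.

Lemma rank_ge_det_mulmx r p (X : 'M[F]_(r, p)) (M : 'M[F]_p) (Y : 'M[F]_(p, r)) :
  \det (X *m M *m Y) != 0 -> (r <= \rank M)%N.
Proof.
move=> det_neq0; have XMY_unit : X *m M *m Y \in unitmx by rewrite unitmxE unitfE.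
rewrite -{1}(mxrank_unit XMY_unit).
by apply: leq_trans (mxrankM_maxl _ _) _; exact: mxrankM_maxr.
Qed.

End RankFactorization.

Definition Ck_pair_rank (R : realType) m d k : set ('I_m.+1 -> 'M[R]_d) :=
  [set B | Ck R m d k B /\ forall a b : 'I_m.+1, \rank (B a *m B b) = k].
Arguments Ck_pair_rank : clear implicits.

Section RankPairsOpen.
Variables (R : realType) (m d : nat).
Local Notation family := ('I_m.+1 -> 'M[R]_d).

Lemma near_rank_mulmx_ge (B0 : family) a b r : \rank (B0 a *m B0 b) = r ->
  \forall B \near close_to B0, (r <= \rank (B a *m B b))%N.
Proof.
move=> rank_r; have [C [N [L [N' [B0ab LC NN']]]]] := rank_factorization rank_r.
pose g (B : family) := \det (L *m (B a *m B b) *m N').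
have g_B0 : g B0 = 1 by rewrite /g B0ab mulmxA LC mul1mx NN' det1.
have g_cvg : g @ close_to B0 --> g B0.
  apply/cvg_det_at/mx_cvg_at_mulmx/mx_cvg_at_cst.
  by apply/mx_cvg_at_mulmx/mx_cvg_at_mulmx;
    [exact: mx_cvg_at_cst | exact: mx_cvg_at_entry..].
have g_near : \forall B \near close_to B0, g B != 0.
  by apply: (cvgr_neq0 _ g_cvg); rewrite g_B0 oner_neq0.
by apply: filterS g_near => B; exact: rank_ge_det_mulmx.
Qed.

Lemma Ck_pair_rank_open k : rel_open R m d (Ck R m d k) (Ck_pair_rank R m d k).
Proof.
split=> [B [] //|B [_ rankBB]].
have [e e_gt0 near_B] := @filter_forall _ _ _ (close_to B) _
  (fun ab : 'I_m.+1 * 'I_m.+1 => near_rank_mulmx_ge (rankBB ab.1 ab.2)).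
exists e; split=> // B' rankB' BB'; split=> // a b.
apply/eqP; rewrite eqn_leq -{1}(rankB' b) mxrankM_maxr /=.
exact: near_B B' BB' (a, b).
Qed.

End RankPairsOpen.

Section Interpolation.
Variable R : realType.

Lemma poly_nonroot_near0 (q : {poly R}) (tau : R) : q != 0 -> 0 < tau ->
  exists2 t, 0 < t < tau & q.[t] != 0.
Proof.
move=> q_neq0 tau_gt0; apply: contrapT => all_roots.
pose t_ (i : nat) := tau / i.+2%:R.
have t_inj : injective t_.
  move=> i j /(mulfI (lt0r_neq0 tau_gt0)) /invr_inj /eqP.
  by rewrite eqr_nat => /eqP[].
have roots : all (root q) (mkseq t_ (size q)).
  apply/allP => _ /mapP[i _ ->]; apply/negPn/negP => q_ti; apply: all_roots.
  exists (t_ i) => //; rewrite divr_gt0 ?ltr0n //=.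
  by rewrite ltr_pdivrMr ?ltr0n // ltr_pMr // ltr1n.
have := max_poly_roots q_neq0 roots (mkseq_uniq (size q) t_inj).
by rewrite size_mkseq ltnn.
Qed.

Variable n : nat.

Definition lerp_mxpoly (M0 M1 : 'M[R]_n) : 'M[{poly R}]_n :=
  \matrix_(i, j) ((1 - 'X) * (M0 i j)%:P + 'X * (M1 i j)%:P).

Lemma horner_det_lerp (M0 M1 : 'M[R]_n) t :
  (\det (lerp_mxpoly M0 M1)).[t] = \det ((1 - t) *: M0 + t *: M1).
Proof.
rewrite -horner_evalE -det_map_mx; congr (\det _); apply/matrixP => i j.
by rewrite !mxE /= horner_evalE !hornerE.
Qed.

Lemma det_lerp_neq0 (M0 M1 : 'M[R]_n) s : \det ((1 - s) *: M0 + s *: M1) != 0 ->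
  \det (lerp_mxpoly M0 M1) != 0.
Proof. by rewrite -horner_det_lerp; apply: contraNneq => ->; rewrite horner0. Qed.

End Interpolation.

Lemma exists_lerp_units (R : realType) n k
    (M0 M1 : 'M[R]_n) (N0 N1 : 'M[R]_k) s s' tau :
  \det ((1 - s) *: M0 + s *: M1) != 0 -> \det ((1 - s') *: N0 + s' *: N1) != 0 ->
  0 < tau -> exists2 t, 0 < t < tau &
    \det ((1 - t) *: M0 + t *: M1) != 0 /\ \det ((1 - t) *: N0 + t *: N1) != 0.
Proof.
move=> /det_lerp_neq0 M_neq0 /det_lerp_neq0 N_neq0 tau_gt0.
have [t t_range] := poly_nonroot_near0 (mulf_neq0 M_neq0 N_neq0) tau_gt0.
by rewrite hornerM mulf_eq0 negb_or !horner_det_lerp => /andP[]; exists t.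
Qed.

Section Density.
Variables (R : realType) (m d : nat).
Local Notation family := ('I_m.+1 -> 'M[R]_d).
Local Notation close := (Defs.close R m d).

Lemma close_mulmx_near1 (B : family) (X : 'M[R]_d) e : 0 < e ->
  exists2 delta, 0 < delta & forall t, 0 < t < delta ->
    close e B (fun c => B c *m (1%:M + t *: X)).
Proof.
move=> e_gt0; pose K := 1 + \sum_c mxnorm1 (B c *m X).
have K_gt0 : 0 < K by rewrite ltr_wpDr // sumr_ge0 // => c _; exact: mxnorm1_ge0.
have BX_le c i j : `|(B c *m X) i j| <= K.
  apply: le_trans (entry_le_mxnorm1 _ i j) _; rewrite ler_wpDl // (bigD1 c) //=.
  by rewrite lerDl sumr_ge0 // => c' _; exact: mxnorm1_ge0.
exists (e / K) => [|t /andP[t_gt0 t_lt] c i j]; first by rewrite divr_gt0.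
rewrite mulmxDr mulmx1 -scalemxAr; set BX := B c *m X.
rewrite [(B c + _) i j]mxE addrAC subrr add0r.
rewrite mxE normrM (ger0_norm (ltW t_gt0)).
apply: le_lt_trans (_ : t * K < e); first by apply: ler_wpM2l; [exact: ltW | exact: BX_le].
by rewrite -ltr_pdivlMr.
Qed.

Lemma perturb_rank_pair k (B : family) a b e : Ck R m d k B -> 0 < e ->
  exists B' : family, [/\ Ck R m d k B', close e B B' & \rank (B' a *m B' b) = k].
Proof.
move=> rankB e_gt0.
have [Ca [Na [La [Na' [BaE LaCa NaNa']]]]] := rank_factorization (rankB a).
have [Cb [Nb [Lb [Nb' [BbE LbCb NbNb']]]]] := rank_factorization (rankB b).
pose H := Na' *m Lb.
have [delta delta_gt0 closeB] := close_mulmx_near1 B (H - 1%:M) e_gt0.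
have det_G0 : \det ((1 - 0) *: 1%:M + 0 *: H) != 0.
  by rewrite subr0 scale1r scale0r addr0 det1 oner_neq0.
have det_Z1 : \det ((1 - 1) *: (Na *m Cb) + 1 *: 1%:M) != 0.
  by rewrite subrr scale0r add0r scale1r det1 oner_neq0.
have [t t_range [G_unit Z_unit]] := exists_lerp_units det_G0 det_Z1 delta_gt0.
pose G := (1 - t) *: 1%:M + t *: H.
have G_free : row_free G by rewrite row_free_unit unitmxE unitfE.
exists (fun c => B c *m G); split.
- by move=> c; rewrite mxrankMfree.
- have -> : G = 1%:M + t *: (H - 1%:M).
    by rewrite /G scalerBl scale1r scalerBr addrA addrAC.
  exact: closeB.
rewrite mulmxA mxrankMfree //; apply/eqP; rewrite eqn_leq -{1}(rankB b) mxrankM_maxr /=.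
apply: (@rank_ge_det_mulmx _ _ _ La _ Nb').
suff -> : La *m (B a *m G *m B b) *m Nb' = (1 - t) *: (Na *m Cb) + t *: 1%:M by [].
rewrite BaE BbE !mulmxA LaCa mul1mx -(mulmxA _ Nb) NbNb' mulmx1.
rewrite /G mulmxDr mulmxDl -!scalemxAr -!scalemxAl mulmx1.
by rewrite /H !mulmxA NaNa' mul1mx LbCb.
Qed.

Lemma perturb_rank_pairs k (s : seq ('I_m.+1 * 'I_m.+1)) (B : family) e :
  Ck R m d k B -> 0 < e -> exists B' : family, [/\ Ck R m d k B', close e B B' &
    forall ab, ab \in s -> \rank (B' ab.1 *m B' ab.2) = k].
Proof.
elim: s B e => [|ab s IHs] B e rankB e_gt0.
  by exists B; split=> // c i j; rewrite subrr normr0.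
have e2_gt0 : 0 < e / 2 by rewrite divr_gt0.
have [B1 [rankB1 B_B1 rankB1s]] := IHs B (e / 2) rankB e2_gt0.
have [delta delta_gt0 near_B1] : \forall B' \near close_to B1,
    forall ab' : 'I_m.+1 * 'I_m.+1, ab' \in s -> (k <= \rank (B' ab'.1 *m B' ab'.2))%N.
  apply: filter_forall => ab'; case: (boolP (ab' \in s)) => [/rankB1s|_].
    by move/near_rank_mulmx_ge; apply: filterS.
  exact: nearW.
have e'_gt0 : 0 < Num.min delta (e / 2) by rewrite lt_min delta_gt0.
have [B2 [rankB2 B1_B2 rankB2ab]] := perturb_rank_pair ab.1 ab.2 rankB1 e'_gt0.
exists B2; split=> // [|ab']; first apply: (close_mono (close_triangle B_B1 B1_B2)).
  by rewrite [leRHS](splitr e) lerD2l ge_min lexx orbT.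
rewrite in_cons => /orP[/eqP -> //|ab'_s].
apply/eqP; rewrite eqn_leq -{1}(rankB2 ab'.2) mxrankM_maxr near_B1 //.
by apply: (close_mono B1_B2); rewrite ge_min lexx.
Qed.

Lemma Ck_pair_rank_dense k : rel_dense R m d (Ck R m d k) (Ck_pair_rank R m d k).
Proof.
split=> [B [] //|B rankB e e_gt0].
have [B' [rankB' BB' rankBB']] :=
  perturb_rank_pairs (enum {: 'I_m.+1 * 'I_m.+1}) rankB e_gt0.
by exists B'; split=> //; split=> // a b; apply: (rankBB' (a, b)); rewrite mem_enum.
Qed.

End Density.

Theorem proposition2p4 (R : realType) (m d k : nat) (p : 'I_m.+1 -> R)
    (P : probability (Seq m) R)
    (p_pos : forall a, 0 < p a) (p_sum : \sum_(a < m.+1) p a = 1)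
    (P_bern : bernoulli_product R m p P)
    (k_ge1 : (1 <= k)%N) (k_led : (k <= d)%N)
    (A : 'I_m.+1 -> 'M[R]_d) (A_Ck : Ck R m d k A) :
  ((k < d)%N -> Lyap R m d P A k.+1 = -oo%E) /\
  ((forall a b : 'I_m.+1, \rank (A a *m A b) = k) <-> (-oo < Lyap R m d P A k)%E) /\
  (let S := [set B | Ck R m d k B /\
                     forall a b : 'I_m.+1, \rank (B a *m B b) = k] in
   rel_open R m d (Ck R m d k) S /\ rel_dense R m d (Ck R m d k) S).
Proof.
split=> [k_lt_d|].
  by apply: Lyap_rank_lt => // a; rewrite A_Ck.
split; last by split; [exact: Ck_pair_rank_open | exact: Ck_pair_rank_dense].
split=> [|Lyap_gt a b]; first exact: Lyap_gt_Ny.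
apply/eqP; rewrite eqn_leq -{1}(A_Ck b) mxrankM_maxr leqNgt /=.
apply: contraTN Lyap_gt => /(Lyap_rank_pair_lt p_pos p_sum P_bern k_led) ->.
by rewrite ltxx.
Qed.
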